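(* Let $G$ be a connected graph on $X$. For every $k\ge1$, the collection $\mathcal C_k$ is chain-vanishing. In particular, if $G$ is multi-ended, the collection of thin cuts is chain-vanishing.
   Context: A graph on $X$ is an irreflexive symmetric relation $G\subseteq X^2$. For $A\subseteq X$, $\delta A$ is the set of edges with one endpoint in $A$ and the other in $X\setminus A$. A cut is a set $A\subseteq X$ with $A$ and $X\setminus A$ infinite and $\delta A$ finite; $G$ is multi-ended if it has a cut; a cut is thin if $|\delta A|$ is minimal among all cuts. A cut $A$ is neat if the induced subgraphs on $A$ and on $X\setminus A$ are connected; $\mathcal C_k$ is the set of neat cuts $A$ with $|\delta A|=k$. A chain is a sequence $(A_n)_{n\in\mathbb N}$ strictly increasing or strictly decreasing under inclusion. For a collection $\mathcal S$ of subsets, a decreasing (resp. increasing) chain is $\mathcal S$-vanishing if there is no $B\in\mathcal S$ with $B\subseteq A_n$ (resp. $B\cap A_n=\emptyset$) for all $n$; $\mathcal S$ is chain-vanishing if every chain of members of $\mathcal S$ is $\mathcal S$-vanishing. *)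

From Stdlib Require Import List Relation_Operators.
Import ListNotations.

Section Defs.
Variable X : Type.

Definition is_graph (G : X -> X -> Prop) : Prop :=
  (forall x, ~ G x x) /\ (forall x y, G x y -> G y x).

Definition has_card {T : Type} (P : T -> Prop) (n : nat) : Prop :=
  exists l : list T, NoDup l /\ length l = n /\ (forall t, In t l <-> P t).

Definition finite {T : Type} (P : T -> Prop) : Prop :=
  exists l : list T, forall t, P t -> In t l.

Definition infinite {T : Type} (P : T -> Prop) : Prop := ~ finite P.

Definition compl (A : X -> Prop) : X -> Prop := fun x => ~ A x.

(* delta A: edges with one endpoint in A and the other outside A.  Each
   (unordered) such edge is represented exactly once as the ordered pair
   (x, y) with x in A and y not in A. *)
Definition delta (G : X -> X -> Prop) (A : X -> Prop) : X * X -> Prop :=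
  fun p => G (fst p) (snd p) /\ A (fst p) /\ ~ A (snd p).

Definition connected_on (G : X -> X -> Prop) (S : X -> Prop) : Prop :=
  forall x y, S x -> S y ->
    clos_refl_trans X (fun u v => G u v /\ S u /\ S v) x y.

Definition connected (G : X -> X -> Prop) : Prop :=
  connected_on G (fun _ => True).

Definition is_cut (G : X -> X -> Prop) (A : X -> Prop) : Prop :=
  infinite A /\ infinite (compl A) /\ finite (delta G A).

Definition multi_ended (G : X -> X -> Prop) : Prop :=
  exists A, is_cut G A.

Definition thin_cut (G : X -> X -> Prop) (A : X -> Prop) : Prop :=
  is_cut G A /\ exists n, has_card (delta G A) n /\
    forall B m, is_cut G B -> has_card (delta G B) m -> n <= m.

Definition neat (G : X -> X -> Prop) (A : X -> Prop) : Prop :=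
  is_cut G A /\ connected_on G A /\ connected_on G (compl A).

Definition C (G : X -> X -> Prop) (k : nat) : (X -> Prop) -> Prop :=
  fun A => neat G A /\ has_card (delta G A) k.

Definition subset (A B : X -> Prop) : Prop := forall x, A x -> B x.
Definition strict_subset (A B : X -> Prop) : Prop := subset A B /\ ~ subset B A.

Definition increasing_chain (A : nat -> X -> Prop) : Prop :=
  forall n, strict_subset (A n) (A (S n)).
Definition decreasing_chain (A : nat -> X -> Prop) : Prop :=
  forall n, strict_subset (A (S n)) (A n).

Definition vanishing_decr (SS : (X -> Prop) -> Prop) (A : nat -> X -> Prop) : Prop :=
  ~ exists B, SS B /\ forall n, subset B (A n).
Definition vanishing_incr (SS : (X -> Prop) -> Prop) (A : nat -> X -> Prop) : Prop :=
  ~ exists B, SS B /\ forall n x, B x -> A n x -> False.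

Definition chain_vanishing (SS : (X -> Prop) -> Prop) : Prop :=
  forall A : nat -> X -> Prop, (forall n, SS (A n)) ->
    (decreasing_chain A -> vanishing_decr SS A) /\
    (increasing_chain A -> vanishing_incr SS A).

End Defs.

From Stdlib Require Import List Relation_Operators Classical Lia FinFun.
Import ListNotations.

(* Let A_0 ⊋ A_1 ⊋ ... be a chain with |δA_n| <= k and D its intersection.
   Every finite set of edges of δD eventually lies in δA_N (their outer
   endpoints eventually leave A_N), so |δD| <= k, and for some N the whole of
   δD already lies in δA_N.  Pick x in A_N \ D and suppose d in D.  If A_N is
   connected, a path from d to x inside A_N leaves D through an edge of δD with
   outer endpoint in A_N, which is impossible.  If G is connected, a path from
   x to d leaves A_N \ D through an edge that is either such an impossible
   edge of δD, or an edge of δA_N outside δD; in the latter case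
   |δA_N| > |δD|, contradicting minimality when D is a cut and the A_n are thin.
   Increasing chains are handled by passing to complements. *)

Definition card_le {T : Type} (P : T -> Prop) (k : nat) : Prop :=
  forall l, NoDup l -> (forall t, In t l -> P t) -> length l <= k.

Lemma has_card_card_le {T : Type} (P : T -> Prop) n : has_card P n -> card_le P n.
Proof.
  intros [l' [Hnd [<- Hl']]] l Hl Hin.
  apply NoDup_incl_length; [exact Hl|].
  intros t It; apply Hl', Hin, It.
Qed.

Lemma card_le_has_card {T : Type} (P : T -> Prop) k :
  card_le P k -> exists n, has_card P n.
Proof.
  intros Hk.
  (* Extend a duplicate-free list inside [P] greedily; the fuel [f] can only
     run out past the bound [k]. *)
  assert (Hgrow : forall f l, NoDup l -> (forall t, In t l -> P t) ->
                    k < length l + f -> exists n, has_card P n).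
  { induction f as [|f IHf]; intros l Hl Hin Hlt.
    - specialize (Hk l Hl Hin); lia.
    - destruct (classic (forall t, P t -> In t l)) as [Hall|Hmiss].
      + exists (length l), l; repeat split; auto.
      + apply not_all_ex_not in Hmiss as [t Ht].
        apply imply_to_and in Ht as [Pt Nt].
        apply (IHf (t :: l)); [constructor; auto | | cbn; lia].
        intros t' [<-|It']; auto. }
  apply (Hgrow (S k) []); [constructor | intros t [] | cbn; lia].
Qed.

Lemma clos_rt_crossing {T : Type} (R : T -> T -> Prop) (P : T -> Prop) a b :
  clos_refl_trans T R a b -> P a -> ~ P b -> exists u v, R u v /\ P u /\ ~ P v.
Proof.
  induction 1 as [u v Ruv| |x y z _ IHxy _ IHyz]; intros Pa Nb.
  - eauto.
  - contradiction.
  - destruct (classic (P y)); eauto.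
Qed.

Lemma clos_rt_mono {T : Type} (R S : T -> T -> Prop) a b :
  (forall u v, R u v -> S u v) -> clos_refl_trans T R a b -> clos_refl_trans T S a b.
Proof.
  intros HRS; induction 1; [apply rt_step; auto | apply rt_refl | eapply rt_trans; eauto].
Qed.

Section Chains.

Variable X : Type.
Variable G : X -> X -> Prop.

Definition bigcap (A : nat -> X -> Prop) : X -> Prop := fun x => forall n, A n x.

Definition swap (e : X * X) : X * X := (snd e, fst e).

Lemma swap_inj : Injective swap.
Proof. intros [a b] [c d] H; injection H as -> ->; reflexivity. Qed.

Lemma swapK e : swap (swap e) = e.
Proof. destruct e; reflexivity. Qed.

Lemma complK (A : X -> Prop) x : compl X (compl X A) x <-> A x.
Proof. split; [apply NNPP | intros Ax NAx; exact (NAx Ax)]. Qed.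

Lemma infinite_mono (P Q : X -> Prop) :
  (forall x, P x -> Q x) -> infinite P -> infinite Q.
Proof. intros HPQ HP [l Hl]; apply HP; exists l; auto. Qed.

Lemma infinite_inhabited (P : X -> Prop) : infinite P -> exists x, P x.
Proof.
  intros HP; apply NNPP; intros Hno; apply HP.
  exists []; intros t Pt; apply Hno; eauto.
Qed.

Lemma connected_on_ext (S S' : X -> Prop) :
  (forall x, S x <-> S' x) -> connected_on X G S -> connected_on X G S'.
Proof.
  intros HS HG x y Sx Sy.
  apply (clos_rt_mono (fun u v => G u v /\ S u /\ S v)); [firstorder|].
  apply HG; apply HS; assumption.
Qed.

Section Symmetric.

Hypothesis G_sym : forall x y, G x y -> G y x.

Lemma delta_compl (A : X -> Prop) e : delta X G (compl X A) e <-> delta X G A (swap e).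
Proof.
  destruct e as [u v]; unfold delta, swap; cbn.
  rewrite (complK A v); unfold compl; firstorder.
Qed.

Lemma has_card_delta_compl (A : X -> Prop) n :
  has_card (delta X G A) n -> has_card (delta X G (compl X A)) n.
Proof.
  intros [l [Hl [<- Hin]]].
  exists (map swap l); split; [apply Injective_map_NoDup; [apply swap_inj | exact Hl]|].
  split; [apply length_map|].
  intros e; rewrite delta_compl, <- Hin, in_map_iff; split.
  - intros [e' [<- Ie']]; rewrite swapK; exact Ie'.
  - intros Ie; exists (swap e); rewrite swapK; auto.
Qed.

Lemma is_cut_compl (A : X -> Prop) : is_cut X G A -> is_cut X G (compl X A).
Proof.
  intros [HA [HcA [l Hl]]]; split; [exact HcA | split].
  - apply (infinite_mono A); [intros x; apply complK | exact HA].
  - exists (map swap l); intros e He.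
    apply in_map_iff; exists (swap e); rewrite swapK.
    split; [reflexivity | apply Hl, delta_compl, He].
Qed.

Lemma C_compl k (A : X -> Prop) : C X G k A -> C X G k (compl X A).
Proof.
  intros [[Hcut [HcA HcC]] Hk]; split; [split; [|split]|].
  - apply is_cut_compl, Hcut.
  - exact HcC.
  - apply (connected_on_ext A); [intros x; symmetry; apply complK | exact HcA].
  - apply has_card_delta_compl, Hk.
Qed.

Lemma thin_cut_compl (A : X -> Prop) : thin_cut X G A -> thin_cut X G (compl X A).
Proof.
  intros [Hcut [n [Hn Hmin]]]; split; [apply is_cut_compl, Hcut|].
  exists n; split; [apply has_card_delta_compl, Hn | exact Hmin].
Qed.

End Symmetric.

Lemma decreasing_chain_compl (A : nat -> X -> Prop) :
  increasing_chain X A -> decreasing_chain X (fun n => compl X (A n)).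
Proof.
  intros Hinc n; destruct (Hinc n) as [Hsub Hnsub]; split.
  - intros x NAx Ax; exact (NAx (Hsub x Ax)).
  - intros Hsub'; apply Hnsub; intros x Ax.
    apply NNPP; intros NAx; exact (Hsub' x NAx Ax).
Qed.

(* An increasing chain vanishes exactly when its chain of complements does: the
   two conditions are convertible. *)
Lemma chain_vanishing_of_decreasing (SS : (X -> Prop) -> Prop) :
  (forall A, SS A -> SS (compl X A)) ->
  (forall A, (forall n, SS (A n)) -> decreasing_chain X A -> vanishing_decr X SS A) ->
  chain_vanishing X SS.
Proof.
  intros Hcompl Hdecr A HA; split; [apply Hdecr, HA|].
  intros Hinc; exact (Hdecr _ (fun n => Hcompl _ (HA n)) (decreasing_chain_compl A Hinc)).
Qed.

Section Decreasing.

Variable A : nat -> X -> Prop.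
Hypothesis A_decr : decreasing_chain X A.

Lemma decreasing_chain_le m p : m <= p -> subset X (A p) (A m).
Proof.
  induction 1 as [|p _ IH]; intros x Ax; [exact Ax|].
  apply IH, (proj1 (A_decr p)), Ax.
Qed.

Lemma eventually_outside (l : list X) :
  (forall x, In x l -> ~ bigcap A x) -> exists N, forall x, In x l -> ~ A N x.
Proof.
  induction l as [|x l IH]; intros Hl; [exists 0; intros ? []|].
  destruct IH as [N HN]; [intros y Iy; apply Hl; right; exact Iy|].
  destruct (not_all_ex_not _ _ (Hl x (or_introl eq_refl))) as [m Hm].
  exists (max m N); intros y [<-|Iy] Ay.
  - apply Hm, (decreasing_chain_le m (max m N)); [lia | exact Ay].
  - apply (HN y Iy), (decreasing_chain_le N (max m N)); [lia | exact Ay].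
Qed.

Variable k : nat.
Hypothesis A_card : forall n, card_le (delta X G (A n)) k.

Lemma card_le_delta_bigcap : card_le (delta X G (bigcap A)) k.
Proof.
  intros l Hl Hin.
  destruct (eventually_outside (map snd l)) as [N HN].
  { intros v Iv; apply in_map_iff in Iv as [e [<- Ie]]; apply (Hin e Ie). }
  apply (A_card N l Hl); intros e Ie.
  destruct (Hin e Ie) as [Ge [De _]]; repeat split; [exact Ge | apply De |].
  apply HN, in_map_iff; eauto.
Qed.

Lemma delta_bigcap_outside_level :
  exists N, forall e, delta X G (bigcap A) e -> ~ A N (snd e).
Proof.
  destruct (card_le_has_card _ _ card_le_delta_bigcap) as [n [l [_ [_ Hin]]]].
  destruct (eventually_outside (map snd l)) as [N HN].
  { intros v Iv; apply in_map_iff in Iv as [e [<- Ie]]; apply Hin, Ie. }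
  exists N; intros e He; apply HN, in_map_iff; exists e; split; [reflexivity | apply Hin, He].
Qed.

Lemma separating_level : exists N x, A N x /\ ~ bigcap A x /\
  forall e, delta X G (bigcap A) e -> ~ A N (snd e).
Proof.
  destruct delta_bigcap_outside_level as [N HN].
  destruct (not_all_ex_not _ _ (proj2 (A_decr N))) as [x Hx].
  apply imply_to_and in Hx as [Ax NAx].
  exists N, x; repeat split; [exact Ax | intros Dx; exact (NAx (Dx (S N))) | exact HN].
Qed.

Lemma bigcap_empty_of_connected :
  (forall n, connected_on X G (A n)) -> forall d, ~ bigcap A d.
Proof.
  intros Hconn d Dd.
  destruct separating_level as (N & x & Ax & NDx & HN).
  destruct (clos_rt_crossing _ (bigcap A) d x (Hconn N d x (Dd N) Ax) Dd NDx)
    as (u & v & (Guv & _ & Av) & Du & NDv).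
  exact (HN (u, v) (conj Guv (conj Du NDv)) Av).
Qed.

Lemma bigcap_empty_of_minimal :
  (forall x y, G x y -> G y x) -> connected X G ->
  (forall m, has_card (delta X G (bigcap A)) m -> k <= m) -> forall d, ~ bigcap A d.
Proof.
  intros G_sym Hconn Hmin d Dd.
  destruct separating_level as (N & x & Ax & NDx & HN).
  destruct (clos_rt_crossing _ (fun y => A N y /\ ~ bigcap A y) x d
              (Hconn x d I I) (conj Ax NDx) (fun H => proj2 H Dd))
    as (u & v & (Guv & _) & [Au NDu] & Hv).
  destruct (classic (bigcap A v)) as [Dv|NDv].
  - exact (HN (v, u) (conj (G_sym _ _ Guv) (conj Dv NDu)) Au).
  - assert (NAv : ~ A N v) by (intros Av; exact (Hv (conj Av NDv))).
    destruct (card_le_has_card _ _ card_le_delta_bigcap) as [m [l [Hl [<- Hin]]]].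
    assert (Hlong : length ((u, v) :: l) <= k).
    { apply (A_card N).
      - constructor; [intros Iuv; apply NDu, (proj1 (Hin _) Iuv) | exact Hl].
      - intros e [<-|Ie]; [repeat split; assumption|].
        destruct (proj1 (Hin e) Ie) as [Ge [De _]].
        repeat split; [exact Ge | apply De | apply HN, Hin, Ie]. }
    assert (Hshort := Hmin (length l) (ex_intro _ l (conj Hl (conj eq_refl Hin)))).
    cbn in Hlong; lia.
Qed.

End Decreasing.

Lemma C_decreasing_vanishing k (A : nat -> X -> Prop) :
  (forall n, C X G k (A n)) -> decreasing_chain X A -> vanishing_decr X (C X G k) A.
Proof.
  intros HA Hdecr [B [[[[HB _] _] _] HBA]].
  destruct (infinite_inhabited B HB) as [b Bb].
  apply (bigcap_empty_of_connected A Hdecr k) with b.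
  - intros n; apply has_card_card_le, (HA n).
  - intros n; apply (HA n).
  - intros n; apply HBA, Bb.
Qed.

Lemma thin_decreasing_vanishing (A : nat -> X -> Prop) :
  (forall x y, G x y -> G y x) -> connected X G ->
  (forall n, thin_cut X G (A n)) -> decreasing_chain X A ->
  vanishing_decr X (thin_cut X G) A.
Proof.
  intros G_sym Hconn HA Hdecr [B [[[HB _] _] HBA]].
  destruct (HA 0) as [[_ [HcA0 _]] [k [Hk0 Hmin]]].
  assert (A_card : forall n, card_le (delta X G (A n)) k).
  { intros n; destruct (HA n) as [_ [kn [Hkn Hminn]]].
    intros l Hl Hin; etransitivity; [apply (has_card_card_le _ _ Hkn l Hl Hin)|].
    apply (Hminn (A 0)); [apply (HA 0) | assumption]. }
  destruct (infinite_inhabited B HB) as [b Bb].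
  apply (bigcap_empty_of_minimal A Hdecr k A_card G_sym Hconn) with b.
  - intros m Hm; apply (Hmin (bigcap A)); [|exact Hm].
    split; [|split].
    + apply (infinite_mono B); [intros x Bx n; apply HBA, Bx | exact HB].
    + apply (infinite_mono (compl X (A 0))); [intros x NAx Dx; exact (NAx (Dx 0)) | exact HcA0].
    + destruct Hm as [l [_ [_ Hin]]]; exists l; intros e; apply Hin.
  - intros n; apply HBA, Bb.
Qed.

End Chains.

Theorem mainTheorem15 (X : Type) (G : X -> X -> Prop) :
  is_graph X G -> connected X G ->
  (forall k : nat, 1 <= k -> chain_vanishing X (C X G k)) /\
  (multi_ended X G -> chain_vanishing X (thin_cut X G)).
Proof.
  intros [_ G_sym] Hconn; split.
  - intros k _; apply chain_vanishing_of_decreasing.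
    + apply C_compl, G_sym.
    + apply C_decreasing_vanishing.
  - intros _; apply chain_vanishing_of_decreasing.
    + apply thin_cut_compl, G_sym.
    + intros A; apply thin_decreasing_vanishing; assumption.
Qed.
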